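(* Let $T$ be a tree of order $n\ge 1$ and let \[ h(T)=\prod_{w\in V(T)}\bigl(d_T(w)+1\bigr)^{d_T(w)+1}. \] Then $h(T)\le 4^{n-1}n^n$, with equality if and only if $T\cong S_n$.
   Context: $d_T(w)$ denotes the degree of vertex $w$ in $T$. $S_n$ denotes the star on $n$ vertices (for $n\le 3$ this coincides with the path on $n$ vertices). *)

From mathcomp Require Import all_boot.
Set Implicit Arguments. Unset Strict Implicit. Unset Printing Implicit Defensive.

Definition simple_graph (V : finType) (e : rel V) : Prop :=
  symmetric e /\ irreflexive e.

Definition connected_graph (V : finType) (e : rel V) : Prop :=
  forall x y : V, connect e x y.

Definition has_cycle (V : finType) (e : rel V) : Prop :=
  exists c : seq V, 3 <= size c /\ ucycle e c.

Definition acyclic (V : finType) (e : rel V) : Prop := ~ has_cycle e.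

Definition is_tree (V : finType) (e : rel V) : Prop :=
  simple_graph e /\ connected_graph e /\ acyclic e.

Definition deg (V : finType) (e : rel V) (w : V) : nat := #|[pred y | e w y]|.

Definition h_index (V : finType) (e : rel V) : nat :=
  \prod_(w : V) (deg e w).+1 ^ (deg e w).+1.

(* The star S_n on vertex set 'I_n, centre 0. *)
Definition star_rel (n : nat) : rel 'I_n :=
  fun i j => (nat_of_ord i == 0) != (nat_of_ord j == 0).

Definition graph_iso (V W : finType) (e : rel V) (f : rel W) : Prop :=
  exists g : V -> W, bijective g /\ forall x y : V, e x y = f (g x) (g y).

From mathcomp Require Import all_boot fingroup perm zify.
Set Implicit Arguments. Unset Strict Implicit. Unset Printing Implicit Defensive.

(* For n >= 2 every degree is positive; write deg w = a_w + 1, so that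
   h(T) = prod_w wt(a_w) with wt a = (a+2)^(a+2), and the handshake bound
   for trees gives sum_w a_w <= n - 2.  The whole proof then rests on an
   inequality about wt alone: wt a * wt b <= 4 * wt (a + b), strictly when
   a, b > 0 (a consequence of the strict log-convexity of x |-> x^x).
   Merging all entries gives 4 h(T) <= 4^n wt(n-2) = 4^n n^n, and equality
   forces a single positive entry a_c = n - 2, i.e. a vertex c adjacent to
   all others, all of which are leaves: T is a star. *)

(* A Bernoulli-type inequality, (1 + 1/Q)^k <= (Q+1)/(Q+1-k), cleared of
   denominators. *)
Lemma bernoulli_cleared Q k : (Q + 1) ^ k * (Q + 1 - k) <= Q ^ k * (Q + 1).
Proof.
elim: k => [|k IH]; first by rewrite !expn0 subn0.
have step : (Q + 1) ^ k.+1 * (Q + 1 - k.+1) <= Q * ((Q + 1) ^ k * (Q + 1 - k)).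
  have H : (Q + 1) * (Q + 1 - k.+1) <= Q * (Q + 1 - k) by nia.
  rewrite expnS; move: ((Q + 1) ^ k) H => A H; nia.
by apply: (leq_trans step); rewrite expnS -mulnA leq_mul2l IH orbT.
Qed.

(* With P = x(x+2) the two sides are
   (P+1)^(x+1) and P^x (x+2)^2; Bernoulli bounds (P+1)^x by P^x (P+1)/(P+1-x)
   and what remains is a polynomial inequality. *)
Lemma selfpow_sq_lt x : (x + 1) ^ (2 * (x + 1)) < x ^ x * (x + 2) ^ (x + 2).
Proof.
set P := x * (x + 2).
have lhsE : (x + 1) ^ (2 * (x + 1)) = (P + 1) ^ x * (P + 1).
  have sqE : (x + 1) ^ 2 = P + 1 by rewrite /P; nia.
  by rewrite expnM sqE expnD expn1.
have rhsE : x ^ x * (x + 2) ^ (x + 2) = P ^ x * (x + 2) ^ 2.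
  by rewrite expnD mulnA expnMn.
rewrite lhsE rhsE.
have Ppos : 0 < P ^ x by rewrite expn_gt0 /P; case: (x) => // m; rewrite muln_gt0.
have gap_pos : 0 < P + 1 - x by rewrite /P; lia.
rewrite -(ltn_pmul2r gap_pos).
apply: (@leq_ltn_trans (P ^ x * (P + 1) * (P + 1))).
  by rewrite mulnAC leq_mul2r bernoulli_cleared orbT.
rewrite -!mulnA ltn_pmul2l // /P.
have -> : x * (x + 2) + 1 - x = x * x + x + 1 by lia.
rewrite !mulnDr !mulnDl; nia.
Qed.

Lemma selfpow_gt0 x : 0 < x ^ x.
Proof. by case: x => // n; rewrite expn_gt0. Qed.

(* The ratio (x+1)^(x+1) / x^x is strictly increasing in x. *)
Lemma selfpow_ratio_lt x y : x < y -> (x + 1) ^ (x + 1) * y ^ y < (y + 1) ^ (y + 1) * x ^ x.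
Proof.
elim: y => // y IH; rewrite ltnS leq_eqVlt => /orP [/eqP <- | lt_xy].
  have := selfpow_sq_lt x; rewrite mul2n -addnn expnD.
  have -> : x.+1 + 1 = x + 2 by lia.
  by rewrite -[x.+1]addn1 mulnC.
have E : y.+1 + 1 = y + 2 by lia.
rewrite E -[y.+1]addn1 -(ltn_pmul2r (selfpow_gt0 y)).
apply: (@leq_trans ((y + 1) ^ (y + 1) * x ^ x * (y + 1) ^ (y + 1))).
  by rewrite mulnAC ltn_pmul2r ?IH // expn_gt0 addn1.
rewrite mulnAC -expnD addnn -mul2n mulnAC (mulnC ((y + 2) ^ _)).
by rewrite leq_mul2r ltnW ?selfpow_sq_lt // orbT.
Qed.

(* Contribution to h of a vertex of degree a+1: (a+2)^(a+2). *)
Definition wt (a : nat) : nat := a.+2 ^ a.+2.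

Lemma wt_gt0 a : 0 < wt a.
Proof. by rewrite expn_gt0. Qed.

Lemma wt_lt a b : a < b -> wt a < wt b.
Proof.
move=> ab; apply: (@leq_trans (b.+2 ^ a.+2)); first by rewrite ltn_exp2r.
by apply: leq_pexp2l => //; lia.
Qed.

Lemma wt_le a b : a <= b -> wt a <= wt b.
Proof. by rewrite leq_eqVlt => /orP [/eqP -> //|/wt_lt/ltnW]. Qed.

Lemma wt_inj : injective wt.
Proof.
move=> a b Eab; case: (ltngtP a b) => // /wt_lt; by rewrite Eab ltnn.
Qed.

(* Moving one unit from a small entry b to a larger one a+b increases
   the product of weights (strictly unless a = 0). *)
Lemma wt_shift_lt a b : 0 < a -> wt b.+1 * wt (a + b) < wt (a + b).+1 * wt b.
Proof.
move=> a0; have H : b.+2 < (a + b).+2 by lia.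
by move: (selfpow_ratio_lt H); rewrite /wt !addn1.
Qed.

Lemma wt_shift_le a b : wt b.+1 * wt (a + b) <= wt (a + b).+1 * wt b.
Proof.
case: a => [|a]; first by rewrite add0n mulnC.
exact/ltnW/wt_shift_lt.
Qed.

(* Superadditivity up to the factor 4 = wt 0: merging two entries never
   decreases the product, and strictly increases it if both are positive. *)
Lemma wt_merge a b : wt a * wt b <= 4 * wt (a + b).
Proof.
elim: b => [|b IH]; first by rewrite addn0 mulnC.
rewrite -(leq_pmul2r (wt_gt0 (a + b))) addnS.
apply: (@leq_trans (wt a * (wt (a + b).+1 * wt b))).
  by rewrite -mulnA leq_mul2l wt_shift_le orbT.
apply: (@leq_trans (wt (a + b).+1 * (4 * wt (a + b)))).
  by rewrite mulnCA leq_mul2l IH orbT.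
by rewrite mulnCA mulnA.
Qed.

Lemma wt_merge_lt a b : 0 < a -> 0 < b -> wt a * wt b < 4 * wt (a + b).
Proof.
move=> a0; case: b => // b _.
rewrite -(ltn_pmul2r (wt_gt0 (a + b))) addnS.
apply: (@leq_trans (wt a * (wt (a + b).+1 * wt b))).
  by rewrite -mulnA ltn_pmul2l ?wt_gt0 // wt_shift_lt.
apply: (@leq_trans (wt (a + b).+1 * (4 * wt (a + b)))).
  by rewrite mulnCA leq_mul2l wt_merge orbT.
by rewrite mulnCA mulnA.
Qed.

Lemma prod_wt_le_seq (T : Type) (r : seq T) (a : T -> nat) :
  4 * \prod_(w <- r) wt (a w) <= 4 ^ size r * wt (\sum_(w <- r) a w).
Proof.
elim: r => [|x r IH]; first by rewrite !big_nil.
rewrite !big_cons /= expnS.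
apply: (@leq_trans (wt (a x) * (4 ^ size r * wt (\sum_(j <- r) a j)))).
  by rewrite mulnCA leq_mul2l IH orbT.
by rewrite mulnCA -mulnA (mulnCA 4) leq_mul2l wt_merge orbT.
Qed.

Lemma prod_wt_le (V : finType) (a : V -> nat) :
  4 * \prod_(w : V) wt (a w) <= 4 ^ #|V| * wt (\sum_(w : V) a w).
Proof.
have -> : #|V| = size (index_enum V) by rewrite cardT enumT.
exact: prod_wt_le_seq.
Qed.

Lemma big_split_pair (R : Type) (idx : R) (op : Monoid.com_law idx) (V : finType)
    (F : V -> R) u v :
  u != v ->
  \big[op/idx]_(w : V) F w =
  op (F u) (op (F v) (\big[op/idx]_(w | (w != u) && (w != v)) F w)).
Proof. by move=> uv; rewrite (bigD1 u) // (bigD1 v) // eq_sym. Qed.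

(* If two distinct entries are positive, merging them into one keeps the sum
   and strictly increases the product, so the bound of prod_wt_le is strict. *)
Lemma prod_wt_lt (V : finType) (a : V -> nat) u v :
  u != v -> 0 < a u -> 0 < a v ->
  4 * \prod_(w : V) wt (a w) < 4 ^ #|V| * wt (\sum_(w : V) a w).
Proof.
move=> uv au av.
pose b w := if w == u then a u + a v else if w == v then 0 else a w.
have vu : (v == u) = false by rewrite eq_sym; apply/negbTE.
have b_rest : forall w, (w != u) && (w != v) -> b w = a w.
  by move=> w /andP [wu wv]; rewrite /b (negbTE wu) (negbTE wv).
have sum_split (c : V -> nat) :
    \sum_(w : V) c w = c u + (c v + \sum_(w | (w != u) && (w != v)) c w).
  exact: big_split_pair.
have prod_split (c : V -> nat) : \prod_(w : V) wt (c w) =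
    wt (c u) * (wt (c v) * \prod_(w | (w != u) && (w != v)) wt (c w)).
  exact: big_split_pair.
have sum_ab : \sum_(w : V) b w = \sum_(w : V) a w.
  by rewrite !sum_split (eq_bigr _ b_rest) /b eqxx vu eqxx add0n addnA.
have prod_ab : \prod_(w : V) wt (a w) < \prod_(w : V) wt (b w).
  have rest w : (w != u) && (w != v) -> wt (b w) = wt (a w) by move/b_rest ->.
  rewrite !prod_split (eq_bigr _ rest) /b eqxx vu eqxx.
  rewrite [X in X < _]mulnA [X in _ < X]mulnA ltn_pmul2r.
    by rewrite [X in _ < X]mulnC wt_merge_lt.
  by rewrite prodn_gt0 // => w; apply: wt_gt0.
rewrite -sum_ab; apply: leq_trans (prod_wt_le b).
by rewrite ltn_pmul2l.
Qed.

Lemma prod_wt_extremal (V : finType) (a : V -> nat) N :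
  0 < #|V| -> \sum_(w : V) a w <= N ->
  4 * \prod_(w : V) wt (a w) = 4 ^ #|V| * wt N ->
  exists2 c, a c = N & forall w, w != c -> a w = 0.
Proof.
move=> V_gt0 sumN Heq.
have pos_unique : forall u v, 0 < a u -> 0 < a v -> u = v.
  move=> u v au av; apply/eqP/negPn/negP => uv.
  by have := prod_wt_lt uv au av; rewrite Heq ltnNge leq_mul2l wt_le ?orbT.
have [c zero_off_c] : exists c, forall w, w != c -> a w = 0.
  case: (boolP [exists w, 0 < a w]) => [/existsP [c ac] | /existsPn none].
    exists c => w wc; case: (posnP (a w)) => // aw.
    by rewrite (pos_unique _ _ aw ac) eqxx in wc.
  by case/card_gt0P: V_gt0 => c _; exists c => w _; move: (none w); case: (a w).
exists c => //.
have prodE : \prod_(w : V) wt (a w) = wt (a c) * 4 ^ #|V|.-1.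
  rewrite (bigD1 c) //= (eq_bigr (fun _ => 4)) => [|w /zero_off_c -> //].
  by rewrite prod_nat_const -(cardC1 c); congr (_ * _ ^ _); apply: eq_card => w; rewrite !inE.
apply: wt_inj; apply/eqP; rewrite -(eqn_pmul2l (expn_gt0 4 #|V|)) mulnC -Heq prodE.
by rewrite mulnCA -expnS prednK.
Qed.

Definition deg_in (V : finType) (e : rel V) (S : {set V}) (w : V) : nat :=
  #|[set y in S | e w y]|.

Lemma chord_cycle (V : finType) (e : rel V) z r1 y r2 :
  symmetric e -> path e z (r1 ++ y :: r2) -> uniq (z :: r1 ++ y :: r2) ->
  r1 != [::] -> e z y -> has_cycle e.
Proof.
move=> e_sym pth un r1n ezy; exists (z :: rcons r1 y); split.
  by case: r1 r1n {pth un} => // a l _ /=; rewrite size_rcons.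
rewrite /ucycle /= rcons_path.
move: pth; rewrite cat_path /= => /and3P [p1 l1 _].
rewrite rcons_path p1 l1 last_rcons e_sym ezy /=.
move: un; rewrite /= mem_cat inE negb_or cat_uniq /= mem_rcons inE negb_or rcons_uniq.
case/and5P=> /and3P[h1 h2 _] h3 /norP[h4 _] _ _.
by rewrite negb_or h1 h2 h3 h4.
Qed.

Lemma extend_path_or_cycle (V : finType) (e : rel V) (S : {set V}) z r :
  simple_graph e -> (forall w, w \in S -> 1 < deg_in e S w) ->
  z \in S -> path e z r -> uniq (z :: r) ->
  has_cycle e \/ exists2 y, y \in S & path e y (z :: r) && uniq (y :: z :: r).
Proof.
move=> [e_sym e_irr] deg2 zS pth un.
have [y yN y_new] : exists2 y, y \in [set y in S | e z y] & y != head z r.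
  have := deg2 z zS; rewrite /deg_in (cardsD1 (head z r)) => H.
  have : 0 < #|[set y in S | e z y] :\ head z r| by move: H; case: (_ \in _) => /=; lia.
  by case/card_gt0P => y /setD1P [yb yN]; exists y.
move: yN; rewrite inE => /andP [yS ezy].
case: (boolP (y \in z :: r)) => yin; last first.
  by right; exists y => //; rewrite /= (e_sym y z) ezy pth /= yin.
left; move: yin; rewrite inE => /orP [/eqP yz | yr]; first by rewrite yz e_irr in ezy.
case/splitPr: yr pth un y_new => r1 r2 pth un y_new.
apply: (chord_cycle e_sym pth un _ ezy).
by case: r1 {pth un} y_new => //=; rewrite eqxx.
Qed.

(* Iterating the extension, which must stop since paths are duplicate-free:
   a nonempty set in which every vertex has induced degree >= 2 spans a
   cycle.  The induction is on the number of vertices not yet on the path. *)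
Lemma min_deg2_cycle (V : finType) (e : rel V) (S : {set V}) :
  simple_graph e -> (forall w, w \in S -> 1 < deg_in e S w) ->
  forall m z r, #|V| - size (z :: r) <= m -> z \in S -> path e z r ->
  uniq (z :: r) -> has_cycle e.
Proof.
move=> e_simple deg2; elim=> [|m IH] z r Hm zS pth un;
  case: (extend_path_or_cycle e_simple deg2 zS pth un) => // [[y yS /andP [pth' un']]].
  move/card_uniqP: un' => /= card_path.
  by have := leq_trans (eq_leq (esym card_path)) (max_card _); move: Hm => /=; lia.
by apply: (IH y (z :: r)) => //; move: Hm => /=; lia.
Qed.

Lemma acyclic_leaf_in (V : finType) (e : rel V) (S : {set V}) :
  simple_graph e -> acyclic e -> S != set0 -> exists2 w, w \in S & deg_in e S w <= 1.
Proof.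
move=> e_simple e_acyc Sn.
case: (boolP [exists w in S, deg_in e S w <= 1]) => [/existsP [w /andP [wS H]] | /existsPn H].
  by exists w.
case: e_acyc; case/set0Pn: Sn => x xS.
apply: (@min_deg2_cycle V e S e_simple _ #|V| x [::]) => //=; last by lia.
by move=> w wS; move: (H w); rewrite wS /= ltnNge.
Qed.

Lemma sum_nat_bool (V : finType) (A : {set V}) (b : pred V) :
  \sum_(x in A) (b x : nat) = #|[set x in A | b x]|.
Proof.
rewrite -sum1_card big_mkcond [RHS]big_mkcond; apply: eq_bigr => x _.
by rewrite inE; case: (x \in A); case: (b x).
Qed.

Lemma deg_in_setD1 (V : finType) (e : rel V) (S : {set V}) w x :
  w \in S -> deg_in e S x = e x w + deg_in e (S :\ w) x.
Proof.
move=> wS; rewrite /deg_in (cardsD1 w) inE wS /=; congr (_ + _).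
by apply: eq_card => y; rewrite !inE andbA.
Qed.

(* Handshake bound for forests: the induced degrees on a nonempty set S sum
   to at most 2|S| - 2.  Induction on |S|, deleting a leaf of S. *)
Lemma acyclic_deg_in_sum (V : finType) (e : rel V) (S : {set V}) :
  simple_graph e -> acyclic e -> S != set0 ->
  \sum_(w in S) deg_in e S w + 2 <= 2 * #|S|.
Proof.
move=> e_simple e_acyc; have [e_sym e_irr] := e_simple.
move: {2}#|S| (leqnn #|S|) => k; elim: k S => [|k IH] S S_le Sn.
  by move: Sn; rewrite -cards_eq0; move: S_le; lia.
have [w wS w_leaf] := acyclic_leaf_in e_simple e_acyc Sn.
rewrite (big_setD1 w wS) /=.
have S_card : #|S| = #|S :\ w|.+1 by rewrite (cardsD1 w S) wS.
case: (boolP (S :\ w == set0)) => [/eqP S0 | S'n].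
  have dw : deg_in e S w = 0.
    apply/eqP; rewrite cards_eq0; apply/eqP/setP => y; rewrite !inE.
    have [-> | yw] := eqVneq y w; first by rewrite e_irr andbF.
    apply/negbTE/andP => [[yS _]].
    have yS' : y \in S :\ w by apply/setD1P.
    by rewrite S0 inE in yS'.
  by rewrite S0 big_set0 dw S_card S0 cards0.
have IH' := IH (S :\ w) ltac:(move: S_le; rewrite S_card; lia) S'n.
rewrite (eq_bigr _ (fun x _ => deg_in_setD1 e x wS)) big_split /= sum_nat_bool.
have -> : #|[set x in S :\ w | e x w]| = deg_in e S w.
  apply: eq_card => x; rewrite !inE (e_sym x w).
  by have [-> | xw] := eqVneq x w; rewrite ?e_irr ?andbF.
by move: IH' w_leaf; rewrite S_card; lia.
Qed.

Lemma deg_in_setT (V : finType) (e : rel V) w : deg e w = deg_in e setT w.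
Proof. by apply: eq_card => y; rewrite !inE. Qed.

Lemma tree_deg_sum (V : finType) (e : rel V) :
  is_tree e -> 0 < #|V| -> \sum_(w : V) deg e w + 2 <= 2 * #|V|.
Proof.
move=> [e_simple [_ e_acyc]] V_gt0.
have : setT != set0 :> {set V} by rewrite -cards_eq0 cardsT; lia.
move/(acyclic_deg_in_sum e_simple e_acyc); rewrite cardsT.
suff -> : \sum_(w : V) deg e w = \sum_(w in setT) deg_in e setT w by [].
by apply: eq_big => [w | w _]; [rewrite inE | apply: deg_in_setT].
Qed.

Lemma connected_deg_gt0 (V : finType) (e : rel V) w :
  connected_graph e -> 1 < #|V| -> 0 < deg e w.
Proof.
move=> e_conn V_gt1.
have : 0 < #|predC1 w| by rewrite cardC1; lia.
case/card_gt0P => v; rewrite inE => vw.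
case/connectP: (e_conn w v) => [[|y p]] /=; first by move=> _ vw'; rewrite vw' eqxx in vw.
by case/andP => ewy _ _; apply/card_gt0P; exists y.
Qed.

Definition star_centre (V : finType) (e : rel V) (c : V) : Prop :=
  forall x y, e x y = ((x == c) != (y == c)).

Lemma star_centre_deg (V : finType) (e : rel V) c w :
  star_centre e c -> deg e w = if w == c then #|V|.-1 else 1.
Proof.
move=> ec; rewrite /deg; have [-> | wc] := eqVneq w c.
  by rewrite -(cardC1 c); apply: eq_card => y; rewrite !inE ec eqxx.
by rewrite -(card1 c); apply: eq_card => y; rewrite !inE ec (negbTE wc); case: (y == c).
Qed.

Lemma star_centre_h (V : finType) (e : rel V) c n :
  star_centre e c -> #|V| = n -> h_index e = 4 ^ (n - 1) * n ^ n.
Proof.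
move=> ec Vn; rewrite /h_index (bigD1 c) //= (star_centre_deg _ ec) eqxx.
rewrite (eq_bigr (fun _ => 4)) => [|w wc]; last by rewrite (star_centre_deg _ ec) (negbTE wc).
have -> : #|V|.-1.+1 = n by move: Vn (max_card (pred1 c)); rewrite card1; lia.
rewrite prod_nat_const mulnC; congr (4 ^ _ * _).
by rewrite -Vn subn1 -(cardC1 c); apply: eq_card => y; rewrite !inE.
Qed.

Lemma iso_star_centre (V : finType) (e : rel V) n :
  0 < n -> graph_iso e (@star_rel n) -> exists c, star_centre e c.
Proof.
move=> n_gt0 [g [[g' gK g'K] eg]]; pose z : 'I_n := Ordinal n_gt0.
have g_centre u : (nat_of_ord (g u) == 0) = (u == g' z).
  apply/eqP/eqP => [gu0 | ->]; last by rewrite g'K.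
  by apply: (can_inj gK); rewrite g'K; apply: val_inj.
by exists (g' z) => x y; rewrite eg /star_rel !g_centre.
Qed.

Lemma star_centre_iso (V : finType) (e : rel V) n c :
  #|V| = n -> star_centre e c -> graph_iso e (@star_rel n).
Proof.
move=> <- ec; have V_gt0 : 0 < #|V| by apply/card_gt0P; exists c.
pose z : 'I_#|V| := Ordinal V_gt0.
pose g x := tperm (enum_rank c) z (enum_rank x).
have g_centre u : (nat_of_ord (g u) == 0) = (u == c).
  have -> : (nat_of_ord (g u) == 0) = (g u == z) by [].
  rewrite /g.
  apply/eqP/eqP => [gu | ->]; last by rewrite tpermL.
  by apply: enum_rank_inj; apply: (@perm_inj _ (tperm (enum_rank c) z)); rewrite gu tpermL.
exists g; split; last by move=> x y; rewrite ec /star_rel !g_centre.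
apply: inj_card_bij; last by rewrite card_ord.
by move=> x y /perm_inj /enum_rank_inj.
Qed.

Lemma card1_star_centre (V : finType) (e : rel V) :
  #|V| = 1 -> irreflexive e -> exists c, star_centre e c.
Proof.
move=> V1 e_irr; have /card_gt0P [c _] : 0 < #|V| by rewrite V1.
have /fintype_le1P all_eq : #|V| <= 1 by rewrite V1.
by exists c => x y; rewrite (all_eq c x) (all_eq c y) e_irr eqxx.
Qed.

Lemma star_centre_of_degrees (V : finType) (e : rel V) c :
  simple_graph e -> deg e c = #|V|.-1 -> (forall w, w != c -> deg e w = 1) ->
  star_centre e c.
Proof.
move=> [e_sym e_irr] deg_c deg_w.
have adj_c y : e c y = (y != c).
  have sub : [pred y | e c y] \subset predC1 c.
    by apply/subsetP => z; rewrite !inE; apply: contraTneq => ->; rewrite e_irr.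
  have card_eq : #|[pred y | e c y]| = #|predC1 c| by rewrite cardC1 -deg_c.
  by have /(subset_cardP card_eq) same := sub; move: (same y); rewrite !inE.
move=> x y; have [-> | xc] := eqVneq x c; first by rewrite adj_c; case: (y == c).
have := cardD1 c [pred z | e x z]; rewrite -/(deg e x) deg_w // inE e_sym adj_c xc add1n.
case=> /esym/card0_eq only_c.
have [-> | yc] := eqVneq y c; first by rewrite e_sym adj_c xc.
by have := only_c y; rewrite !inE yc /= => ->.
Qed.

Lemma tree_h_bound (n : nat) (V : finType) (e : rel V) :
  1 < n -> #|V| = n -> is_tree e ->
  h_index e <= 4 ^ (n - 1) * n ^ n /\
  (h_index e = 4 ^ (n - 1) * n ^ n -> exists c, star_centre e c).
Proof.
move=> n_gt1 Vn e_tree; have [e_simple [e_conn _]] := e_tree.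
pose a w := (deg e w).-1.
have degE w : deg e w = (a w).+1 by rewrite prednK // connected_deg_gt0 // Vn.
have hE : h_index e = \prod_(w : V) wt (a w) by apply: eq_bigr => w _; rewrite degE.
have sum_a : \sum_(w : V) a w <= n - 2.
  have := tree_deg_sum e_tree ltac:(lia).
  rewrite (eq_bigr (fun w => a w + 1)) => [|w _]; last by rewrite degE addn1.
  by rewrite big_split /= sum1_card Vn; lia.
have wt_n : wt (n - 2) = n ^ n by rewrite /wt; have -> : (n - 2).+2 = n by lia.
have pow4 : 4 ^ n = 4 * 4 ^ (n - 1) by rewrite -expnS; congr (_ ^ _); lia.
have bound : 4 * h_index e <= 4 ^ n * wt (n - 2).
  by rewrite hE; apply: leq_trans (prod_wt_le a) _; rewrite Vn leq_mul2l wt_le ?orbT.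
split=> [|h_eq]; first by move: bound; rewrite pow4 wt_n -mulnA leq_pmul2l.
have extremal : 4 * \prod_(w : V) wt (a w) = 4 ^ #|V| * wt (n - 2).
  by rewrite -hE h_eq mulnA -pow4 wt_n Vn.
have [|c ac a0] := prod_wt_extremal _ sum_a extremal; first by rewrite Vn; lia.
exists c; apply: star_centre_of_degrees => // [|w /a0 aw]; rewrite degE ?aw //.
by rewrite ac Vn; lia.
Qed.

Theorem lemma2p8 (n : nat) (V : finType) (e : rel V) :
  1 <= n -> #|V| = n -> is_tree e ->
  h_index e <= 4 ^ (n - 1) * n ^ n /\
  (h_index e = 4 ^ (n - 1) * n ^ n <-> graph_iso e (@star_rel n)).
Proof.
move=> n_gt0 Vn e_tree.
have [h_le h_star] : h_index e <= 4 ^ (n - 1) * n ^ n /\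
    (h_index e = 4 ^ (n - 1) * n ^ n -> exists c, star_centre e c).
  have [n1 | n_gt1] := leqP n 1; last exact: tree_h_bound.
  have [c ec] := card1_star_centre (e := e) ltac:(lia) e_tree.1.2.
  by rewrite (star_centre_h ec Vn); split=> // _; exists c.
split=> //; split=> [/h_star [c ec] | e_iso]; first exact: star_centre_iso Vn ec.
by have [c ec] := iso_star_centre n_gt0 e_iso; apply: star_centre_h ec Vn.
Qed.
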